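(* Let $(W,\bar W)$ be a solution of the $q$-Sato equation (see context). For a constant $\lambda\in\mathbb{C}^\times$ and constant diagonal matrices $D(\alpha)=\mathrm{diag}[\alpha_1,\dots,\alpha_N]$, $D(\beta)=\mathrm{diag}[\beta_1,\dots,\beta_N]$, define $$W_\lambda(\Lambda;s,\underline{x})=\lambda^{s+D(\alpha)}\circ W(\Lambda;s,\underline{x}_\lambda)\circ\lambda^{-s-D(\alpha)},\qquad \bar W_\lambda(\Lambda;s,\underline{x})=\lambda^{s+D(\alpha)}\circ\bar W(\Lambda;s,\underline{x}_\lambda)\circ\lambda^{-s-D(\beta)},$$ where $\underline{x}_\lambda=\{\lambda^nx_n^{(k)}\ (n\ge1,\ k=1,\dots,N)\}$ and $\lambda^{\pm(s+D(\alpha))}$ denotes the operator of multiplication by $\mathrm{diag}[\lambda^{\pm(s+\alpha_1)},\dots,\lambda^{\pm(s+\alpha_N)}]$ (similarly for $\beta$). Then $(W_\lambda,\bar W_\lambda)$ is also a solution of the $q$-Sato equation.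
   Context: Fix $q\in\mathbb{C}$ with $|q|>1$ and $N\ge1$. Let $s\in\mathbb{Z}$ be a discrete variable and $\underline{x}=\{x_n^{(k)}: n\ge1,\ k=1,\dots,N\}$ continuous variables. $\Lambda$ is the shift operator $\Lambda f(s)=f(s+1)$; $T_q(x_n^{(k)})$ is the $q$-shift $x_n^{(k)}\mapsto qx_n^{(k)}$, and $\mathcal{D}_q(x)f(x)=(f(x)-f(qx))/x$; these act on operators coefficientwise. $I_k=[\delta_{ij}\delta_{ik}]_{1\le i,j\le N}$. The Sato–Wilson operators are $W(\Lambda;s,\underline{x})=I+\sum_{i\ge1}W_i(s;\underline{x})\Lambda^{-i}$ and $\bar W(\Lambda;s,\underline{x})=\sum_{j\ge0}\bar W_j(s;\underline{x})\Lambda^j$, with $N\times N$ matrix coefficients and $\bar W_0$ invertible. For $A=\sum_nA_n\Lambda^n$ put $[A]_{\ge0}=\sum_{n\ge0}A_n\Lambda^n$. The $q$-Sato equation: for all $n\ge1$, $k=1,\dots,N$ and $\widetilde W\in\{W,\bar W\}$, $$\mathcal{D}_q(x_n^{(k)})\widetilde W=\Big[\big(T_q(x_n^{(k)})W\big)I_k\Lambda^nW^{-1}\Big]_{\ge0}\widetilde W-\big(T_q(x_n^{(k)})\widetilde W\big)I_k\Lambda^n.$$ *)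

From HB Require Import structures.
From mathcomp Require Import all_boot all_order all_algebra.
From mathcomp Require Import reals complex.
Set Implicit Arguments. Unset Strict Implicit. Unset Printing Implicit Defensive.
Import Order.TTheory GRing.Theory Num.Theory.
Local Open Scope ring_scope.

Section QSato.
Variable C : fieldType.
Variable N : nat.

(* Continuous variables: x n k stands for x_{n+1}^{(k+1)}  (n : nat, k : 'I_N). *)
Definition vars := nat -> 'I_N -> C.
Definition coef := int -> vars -> 'M[C]_N.
(* A (formal) difference operator sum_j A_j(s;x) Lambda^j, stored as j |-> A_j. *)
Definition op := int -> coef.

Definition irange (lo hi : int) : seq int :=
  if lo <= hi then mkseq (fun i => lo + i%:Z) (absz (hi - lo)).+1 else [::].

(* Composition A o B, using  (A_n Lambda^n)(B_m Lambda^m) = A_n(s) B_m(s+n) Lambda^(n+m). *)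
(* mulL a b : valid when A_n = 0 for n > a and B_m = 0 for m > b. *)
Definition mulL (a b : int) (A B : op) : op := fun j s x =>
  \sum_(n <- irange (j - b) a) A n s x *m B (j - n) (s + n) x.
(* mulU a b : valid when A_n = 0 for n < a and B_m = 0 for m < b. *)
Definition mulU (a b : int) (A B : op) : op := fun j s x =>
  \sum_(n <- irange a (j - b)) A n s x *m B (j - n) (s + n) x.

Definition idop : op := fun j s x => if j == 0 then 1%:M else 0.
Definition multop (G : coef) : op := fun j s x => if j == 0 then G s x else 0.
Definition shiftop (n : int) (A : op) : op := fun j => A (j - n).
Definition rmulc (A : op) (M : 'M[C]_N) : op := fun j s x => A j s x *m M.
Definition subop (A B : op) : op := fun j s x => A j s x - B j s x.
Definition posp (A : op) : op := fun j s x => if 0 <= j then A j s x else 0.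

(* Inverse of W = I + sum_{i>=1} W_i Lambda^{-i}: the Neumann series
   sum_{m>=0} (I - W)^m, whose Lambda^j-coefficient only involves m <= |j|. *)
Definition opinv (W : op) : op := fun j s x =>
  if j <= 0 then
    \sum_(m < (absz j).+1)
       (iter m (fun P => mulL 0 0 P (subop idop W)) idop) j s x
  else 0.

Definition qshift (q : C) (n : nat) (k : 'I_N) (x : vars) : vars :=
  fun m l => if (m == n) && (l == k) then q * x m l else x m l.
Definition Tq (q : C) (n : nat) (k : 'I_N) (A : op) : op :=
  fun j s x => A j s (qshift q n k x).
Definition Dq (q : C) (n : nat) (k : 'I_N) (A : op) : op :=
  fun j s x => (x n k)^-1 *: (A j s x - A j s (qshift q n k x)).

Definition Ik (k : 'I_N) : 'M[C]_N := delta_mx k k.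

Definition SW_shape (W Wb : op) : Prop :=
  [/\ (forall s x, W 0 s x = 1%:M),
      (forall j s x, 0 < j -> W j s x = 0),
      (forall j s x, j < 0 -> Wb j s x = 0) &
      (forall s x, Wb 0 s x \in unitmx)].

Definition BTerm (q : C) (n : nat) (k : 'I_N) (A : op) : op :=
  shiftop (n.+1)%:Z (rmulc (Tq q n k A) (Ik k)).
Definition Bop (q : C) (n : nat) (k : 'I_N) (W : op) : op :=
  posp (mulL (n.+1)%:Z 0 (BTerm q n k W) (opinv W)).

(* the q-Sato equation, for every flow (n+1,k) and every coefficient Lambda^j,
   at all points where x_{n+1}^{(k+1)} != 0 (where D_q is defined) *)
Definition qSato_eq (q : C) (W Wb : op) : Prop :=
  forall (n : nat) (k : 'I_N) (j : int) (s : int) (x : vars), x n k != 0 ->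
    Dq q n k W j s x
      = subop (mulL (n.+1)%:Z 0 (Bop q n k W) W) (BTerm q n k W) j s x /\
    Dq q n k Wb j s x
      = subop (mulU 0 0 (Bop q n k W) Wb) (BTerm q n k Wb) j s x.

Definition qSato_solution (q : C) (W Wb : op) : Prop :=
  SW_shape W Wb /\ qSato_eq q W Wb.

(* The transformed pair. pw plays the role of z |-> lambda^z. *)
Definition xlam (lam : C) (x : vars) : vars := fun n k => lam ^+ n.+1 * x n k.
Definition Gpow (pw : C -> C) (al : 'I_N -> C) : coef :=
  fun s x => diag_mx (\row_i pw (s%:~R + al i)).
Definition Gpowinv (pw : C -> C) (al : 'I_N -> C) : coef :=
  fun s x => diag_mx (\row_i pw (- (s%:~R + al i))).
Definition at_xlam (lam : C) (A : op) : op := fun j s x => A j s (xlam lam x).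

Definition Wlam (lam : C) (pw : C -> C) (al : 'I_N -> C) (W : op) : op :=
  mulL 0 0 (mulL 0 0 (multop (Gpow pw al)) (at_xlam lam W)) (multop (Gpowinv pw al)).
Definition Wblam (lam : C) (pw : C -> C) (al be : 'I_N -> C) (Wb : op) : op :=
  mulU 0 0 (mulU 0 0 (multop (Gpow pw al)) (at_xlam lam Wb)) (multop (Gpowinv pw be)).

End QSato.

(** The map [A |-> lambda^(s + D(al)) o A(x_lambda) o lambda^(-s - D(be))] is
    a homomorphism for composition of difference operators (the inner factors
    [lambda^(-s - D(al))] and [lambda^(s + D(al))] cancel), so it commutes with
    inversion, with truncation [[ ]_>=0] and with differences.  Passing
    [Lambda^(n+1)] through [lambda^(-s - D(be))] produces the scalar
    [lambda^(n+1)], and [D_q(x_(n+1)^(k))] applied to a function of [x_lambda]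
    produces the same scalar from the rescaling of [x_(n+1)^(k)].  Hence both
    sides of every q-Sato equation for [(W_lambda, Wb_lambda)] are the images
    of the corresponding sides for [(W, Wb)], multiplied by [lambda^(n+1)]. *)
From HB Require Import structures.
From mathcomp Require Import all_boot all_order all_algebra.
From mathcomp Require Import reals complex.
From mathcomp Require Import zify ring.
From Stdlib Require Import FunctionalExtensionality.
Set Implicit Arguments. Unset Strict Implicit. Unset Printing Implicit Defensive.
Import Order.TTheory GRing.Theory Num.Theory.
Local Open Scope ring_scope.

Section Operators.
Variables (C : fieldType) (N : nat).
Implicit Types (A B : op C N) (a b j s lo hi : int) (x : vars C N).

Lemma op_ext A B : (forall j s x, A j s x = B j s x) -> A = B.
Proof.
move=> eqAB; apply: functional_extensionality => j.
apply: functional_extensionality => s; apply: functional_extensionality => x.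
exact: eqAB.
Qed.

Lemma mem_irange lo hi n : (n \in irange lo hi) = (lo <= n <= hi).
Proof.
rewrite /irange; case: ifP => [le_lo_hi|/negbT]; last first.
  by rewrite -ltNge in_nil => lt_hi_lo; apply/esym/negbTE/negP => /andP[]; lia.
apply/mapP/idP => [ [m] | /andP[le_lo_n le_n_hi] ].
  by rewrite mem_iota add0n => /andP[_ ?] ->; apply/andP; split; lia.
by exists (absz (n - lo)); [rewrite mem_iota add0n|]; lia.
Qed.

Lemma uniq_irange lo hi : uniq (irange lo hi).
Proof.
rewrite /irange; case: ifP => // _.
by rewrite map_inj_uniq ?iota_uniq // => m n /addrI [].
Qed.

Lemma irange_nil lo hi : hi < lo -> irange lo hi = [::].
Proof. by rewrite /irange ltNge => /negbTE ->. Qed.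

Lemma big_irange1 lo hi i (F : int -> 'M[C]_N) :
  lo <= i <= hi -> (forall n, lo <= n <= hi -> n != i -> F n = 0) ->
  \sum_(n <- irange lo hi) F n = F i.
Proof.
move=> irange_i F0; rewrite (bigD1_seq i) ?uniq_irange ?mem_irange //=.
by rewrite big1_seq ?addr0 // => n /andP[n_i]; rewrite mem_irange => /F0; apply.
Qed.

Definition scaleop (c : C) A : op C N := fun j s x => c *: A j s x.

Lemma mulL_scalel c A B a b : mulL a b (scaleop c A) B = scaleop c (mulL a b A B).
Proof.
apply: op_ext => j s x; rewrite /mulL /scaleop scaler_sumr.
by apply: eq_bigr => n _; rewrite scalemxAl.
Qed.

Lemma mulU_scalel c A B a b : mulU a b (scaleop c A) B = scaleop c (mulU a b A B).
Proof.
apply: op_ext => j s x; rewrite /mulU /scaleop scaler_sumr.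
by apply: eq_bigr => n _; rewrite scalemxAl.
Qed.

Lemma subop_scale c A B : subop (scaleop c A) (scaleop c B) = scaleop c (subop A B).
Proof. by apply: op_ext => j s x; rewrite /subop /scaleop scalerBr. Qed.

Lemma posp_scale c A : posp (scaleop c A) = scaleop c (posp A).
Proof. by apply: op_ext => j s x; rewrite /posp /scaleop; case: ifP; rewrite ?scaler0. Qed.

Lemma xlam_qshift (lam q : C) n k x :
  xlam lam (qshift q n k x) = qshift q n k (xlam lam x).
Proof.
apply: functional_extensionality => m; apply: functional_extensionality => l.
by rewrite /xlam /qshift; case: ifP => // _; rewrite mulrCA.
Qed.

Lemma diag_mx_Ik_comm (d : 'rV[C]_N) k : diag_mx d *m Ik C k = Ik C k *m diag_mx d.
Proof.
apply/matrixP => a b; rewrite mul_diag_mx mul_mx_diag !mxE.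
by case: (eqVneq a k) => [->|_]; case: (eqVneq b k) => [->|_];
  rewrite /= ?mulr1 ?mul1r ?mulr0 ?mul0r.
Qed.

End Operators.

Section Gauge.
Variables (C : fieldType) (N : nat) (lam : C) (pw : C -> C).
Hypothesis pwD : forall z w, pw (z + w) = pw z * pw w.
Hypothesis pw0 : pw 0 = 1.
Hypothesis pw1 : pw 1 = lam.
Implicit Types (al be : 'I_N -> C) (A B W Wb : op C N) (a b j s t : int) (x : vars C N).

Definition gauge al be A : op C N :=
  fun j s x => Gpow pw al s x *m A j s (xlam lam x) *m Gpowinv pw be (s + j) x.

Lemma Gpowinv_mulmx al t x x' : Gpowinv pw al t x *m Gpow pw al t x' = 1%:M.
Proof.
apply/matrixP => a b; rewrite mul_diag_mx !mxE.
by case: (eqVneq a b) => [->|_]; rewrite ?mulr0n ?mulr0 // !mulr1n -pwD addNr.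
Qed.

Lemma Gpow_mulmx al t x x' : Gpow pw al t x *m Gpowinv pw al t x' = 1%:M.
Proof.
apply/matrixP => a b; rewrite mul_diag_mx !mxE.
by case: (eqVneq a b) => [->|_]; rewrite ?mulr0n ?mulr0 // !mulr1n -pwD addrN.
Qed.

Lemma Gpow_unit al t x : Gpow pw al t x \in unitmx.
Proof. exact: (mulmx1_unit (Gpow_mulmx al t x x)).1. Qed.

Lemma Gpowinv_unit al t x : Gpowinv pw al t x \in unitmx.
Proof. exact: (mulmx1_unit (Gpowinv_mulmx al t x x)).1. Qed.

Lemma pw_natr m : pw m%:R = lam ^+ m.
Proof. by elim: m => [|m IHm]; rewrite ?pw0 // mulrSr pwD IHm pw1 exprSr. Qed.

Lemma Gpowinv_subn be t (m : nat) x x' :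
  Gpowinv pw be (t - m%:Z) x = lam ^+ m *: Gpowinv pw be t x'.
Proof.
apply/matrixP => a b; rewrite !mxE.
have -> : - ((t - m%:Z)%:~R + be a) = - (t%:~R + be a) + m%:R by rewrite intrB; ring.
by rewrite pwD pw_natr mulrnAr mulrC.
Qed.

Lemma gauge_mul_sum al be A B (r : seq int) j s x :
  \sum_(n <- r) gauge al al A n s x *m gauge al be B (j - n) (s + n) x =
  Gpow pw al s x *m (\sum_(n <- r) A n s (xlam lam x) *m B (j - n) (s + n) (xlam lam x))
    *m Gpowinv pw be (s + j) x.
Proof.
rewrite mulmx_sumr mulmx_suml; apply: eq_bigr => n _; rewrite /gauge.
have -> : s + n + (j - n) = s + j by rewrite addrAC -addrA subrK.
by rewrite !mulmxA -(mulmxA _ (Gpowinv _ _ _ _)) Gpowinv_mulmx mulmx1.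
Qed.

Lemma gauge_mulL al be A B a b :
  mulL a b (gauge al al A) (gauge al be B) = gauge al be (mulL a b A B).
Proof. by apply: op_ext => j s x; rewrite /mulL gauge_mul_sum. Qed.

Lemma gauge_mulU al be A B a b :
  mulU a b (gauge al al A) (gauge al be B) = gauge al be (mulU a b A B).
Proof. by apply: op_ext => j s x; rewrite /mulU gauge_mul_sum. Qed.

Lemma gauge_subop al be A B :
  subop (gauge al be A) (gauge al be B) = gauge al be (subop A B).
Proof. by apply: op_ext => j s x; rewrite /subop /gauge mulmxBr mulmxBl. Qed.

Lemma gauge_posp al be A : posp (gauge al be A) = gauge al be (posp A).
Proof.
by apply: op_ext => j s x; rewrite /posp /gauge; case: ifP; rewrite ?mulmx0 ?mul0mx.
Qed.

Lemma gauge_idop al : gauge al al (@idop C N) = @idop C N.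
Proof.
apply: op_ext => j s x; rewrite /gauge /idop.
by case: eqP => [->|_]; rewrite ?mulmx0 ?mul0mx // mulmx1 addr0 Gpow_mulmx.
Qed.

Lemma gauge_opinv al W : opinv (gauge al al W) = gauge al al (opinv W).
Proof.
have gauge_iter m :
    iter m (fun P => mulL 0 0 P (subop (@idop C N) (gauge al al W))) (@idop C N)
  = gauge al al (iter m (fun P => mulL 0 0 P (subop (@idop C N) W)) (@idop C N)).
  elim: m => [|m /= ->]; first by rewrite gauge_idop.
  by rewrite -[X in subop X (gauge _ _ _)](gauge_idop al) gauge_subop gauge_mulL.
apply: op_ext => j s x; rewrite /opinv; under eq_bigr do rewrite gauge_iter.
rewrite {2}/gauge; case: ifP => _; last by rewrite mulmx0 mul0mx.
by rewrite mulmx_sumr mulmx_suml.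
Qed.

Lemma gauge_Dq al be A q n k :
  lam != 0 -> Dq q n k (gauge al be A) = scaleop (lam ^+ n.+1) (gauge al be (Dq q n k A)).
Proof.
move=> lam_neq0; apply: op_ext => j s x.
rewrite /Dq /gauge /scaleop xlam_qshift [xlam lam x n k]/xlam /Gpow /Gpowinv.
rewrite -mulmxBl -mulmxBr -scalemxAr -scalemxAl scalerA invfM mulrA.
by rewrite mulrV ?mul1r // unitfE expf_neq0.
Qed.

Lemma gauge_BTerm al be A q n k :
  BTerm q n k (gauge al be A) = scaleop (lam ^+ n.+1) (gauge al be (BTerm q n k A)).
Proof.
apply: op_ext => j s x.
rewrite /BTerm /shiftop /rmulc /Tq /gauge /scaleop xlam_qshift addrA.
rewrite (Gpowinv_subn _ _ _ _ x) -scalemxAr -scalemxAl -!mulmxA.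
by rewrite /Gpow /Gpowinv diag_mx_Ik_comm.
Qed.

Lemma gauge_Bop al W q n k :
  Bop q n k (gauge al al W) = scaleop (lam ^+ n.+1) (gauge al al (Bop q n k W)).
Proof.
by rewrite /Bop gauge_BTerm gauge_opinv mulL_scalel gauge_mulL posp_scale gauge_posp.
Qed.

Lemma Wlam_gauge al W :
  (forall j s x, 0 < j -> W j s x = 0) -> Wlam lam pw al W = gauge al al W.
Proof.
move=> W_gt0; apply: op_ext => j s x; rewrite /Wlam {1}/mulL subr0.
have [j_gt0|j_le0] := ltrP 0 j.
  by rewrite irange_nil // big_nil /gauge W_gt0 // mulmx0 mul0mx.
rewrite (big_irange1 (i := j)) ?lexx ?j_le0 //; last first.
  by move=> n _ n_j; rewrite /multop subr_eq0 eq_sym (negbTE n_j) mulmx0.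
rewrite /multop subrr eqxx /mulL subr0 (big_irange1 (i := 0)) ?lexx ?j_le0 //.
  by rewrite eqxx subr0 addr0.
by move=> n _ /negbTE ->; rewrite mul0mx.
Qed.

Lemma Wblam_gauge al be Wb :
  (forall j s x, j < 0 -> Wb j s x = 0) -> Wblam lam pw al be Wb = gauge al be Wb.
Proof.
move=> Wb_lt0; apply: op_ext => j s x; rewrite /Wblam {1}/mulU subr0.
have [j_lt0|j_ge0] := ltrP j 0.
  by rewrite irange_nil // big_nil /gauge Wb_lt0 // mulmx0 mul0mx.
rewrite (big_irange1 (i := j)) ?lexx ?j_ge0 //; last first.
  by move=> n _ n_j; rewrite /multop subr_eq0 eq_sym (negbTE n_j) mulmx0.
rewrite /multop subrr eqxx /mulU subr0 (big_irange1 (i := 0)) ?lexx ?j_ge0 //.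
  by rewrite eqxx subr0 addr0.
by move=> n _ /negbTE ->; rewrite mul0mx.
Qed.

Lemma gauge_SW_shape al be W Wb :
  SW_shape W Wb -> SW_shape (gauge al al W) (gauge al be Wb).
Proof.
case=> W0 W_gt0 Wb_lt0 Wb0_unit; split=> [s x|j s x j_gt0|j s x j_lt0|s x].
- by rewrite /gauge W0 mulmx1 addr0 Gpow_mulmx.
- by rewrite /gauge W_gt0 // mulmx0 mul0mx.
- by rewrite /gauge Wb_lt0 // mulmx0 mul0mx.
- by rewrite /gauge !unitmx_mul Wb0_unit Gpow_unit Gpowinv_unit.
Qed.

Lemma gauge_qSato_eq al be q W Wb :
  lam != 0 -> qSato_eq q W Wb -> qSato_eq q (gauge al al W) (gauge al be Wb).
Proof.
move=> lam_neq0 eqW n k j s x x_neq0.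
have xlam_neq0 : xlam lam x n k != 0 by rewrite mulf_neq0 ?expf_neq0.
have [eqW1 eqW2] := eqW n k j s _ xlam_neq0.
rewrite !gauge_Dq // gauge_Bop !gauge_BTerm mulL_scalel mulU_scalel.
rewrite gauge_mulL gauge_mulU !subop_scale !gauge_subop.
by rewrite /scaleop /gauge eqW1 eqW2.
Qed.

End Gauge.

Theorem proposition1 (R : realType) (N : nat) (q lam : R[i]) (pw : R[i] -> R[i])
    (al be : 'I_N -> R[i]) (W Wb : op R[i] N) :
  (0 < N)%N -> 1 < `|q| -> lam != 0 ->
  (forall z w : R[i], pw (z + w) = pw z * pw w) -> pw 1 = lam ->
  qSato_solution q W Wb ->
  qSato_solution q (Wlam lam pw al W) (Wblam lam pw al be Wb).
Proof.
move=> _ _ lam_neq0 pwD pw1 [shape eqW].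
have pw0 : pw 0 = 1 by apply: (mulfI lam_neq0); rewrite mulr1 -pw1 -pwD addr0.
have [_ W_gt0 Wb_lt0 _] := shape.
rewrite Wlam_gauge // Wblam_gauge //.
split; first exact: (gauge_SW_shape lam pwD pw0 al be shape).
exact: (gauge_qSato_eq pwD pw0 pw1 al be lam_neq0 eqW).
Qed.
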